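(* Let $\langle\theta\rangle:=B_+/B_1$, where $B_1=\langle\eta,\xi,\xi_L\rangle$. Then $HH^n_{(1-n)}(B,\langle\theta\rangle)\cong k$ for $n\in\{1,2\}$ and $0$ otherwise; $HH^n_{(2-n)}(B,\langle\theta\rangle)\cong k$ for $n\in\{5,6\}$ and $0$ otherwise; $HH^n_{(3-n)}(B,\langle\theta\rangle)\cong k$ for $n\in\{9,10\}$ and $0$ otherwise; $HH^n_{(4-n)}(B,\langle\theta\rangle)\cong k$ for $n\in\{13,14\}$ and $0$ otherwise.
   Context: Let $k$ be a field with $\operatorname{char}k\neq2,3$. Let $B$ be the graded $k$-algebra with $k$-basis $\mathrm{id}_L,\mathrm{id}_{\mathcal O},\theta$ (degree $0$) and $\eta,\xi,\xi_L$ (degree $1$), whose only nonzero products of basis elements are $\mathrm{id}_L\mathrm{id}_L=\mathrm{id}_L$, $\mathrm{id}_{\mathcal O}\mathrm{id}_{\mathcal O}=\mathrm{id}_{\mathcal O}$, $\mathrm{id}_L\xi_L=\xi_L\mathrm{id}_L=\xi_L$, $\mathrm{id}_{\mathcal O}\xi=\xi\mathrm{id}_{\mathcal O}=\xi$, $\mathrm{id}_L\eta=\eta\,\mathrm{id}_{\mathcal O}=\eta$, $\mathrm{id}_{\mathcal O}\theta=\theta\,\mathrm{id}_L=\theta$, $\theta\eta=\xi$, $\eta\theta=\xi_L$. Let $R=k\langle\mathrm{id}_L,\mathrm{id}_{\mathcal O}\rangle$, $B_+=\langle\theta,\eta,\xi,\xi_L\rangle$, $B=R\oplus B_+$; tensor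 products are over $R$. $B_1=\langle\eta,\xi,\xi_L\rangle$ is a sub-bimodule of $B_+$. For a graded $B$-bimodule $M$, the reduced Hochschild complex is $C^n(B,M)=\operatorname{Hom}_{R\text{-}R}(B_+^{\otimes_R n},M)$ with $\delta(\phi)(a_0,\dots,a_n)=a_0\phi(a_1,\dots,a_n)+\sum_{i=1}^n(-1)^i\phi(a_0,\dots,a_{i-1}a_i,\dots,a_n)+(-1)^{n+1}\phi(a_0,\dots,a_{n-1})a_n$; $HH^n_{(m)}(B,M)$ is the cohomology of the subcomplex of cochains homogeneous of internal degree $m$ ($\deg\phi(x)=\deg x+m$). *)

From HB Require Import structures.
From mathcomp Require Import all_boot all_order all_algebra.
Set Implicit Arguments. Unset Strict Implicit. Unset Printing Implicit Defensive.
Import Order.TTheory GRing.Theory Num.Theory.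
Local Open Scope ring_scope.

(* Vertices = the two orthogonal idempotents of R = k<id_L, id_O>. *)
Inductive vtx := VL | VO.
Definition vtx_code (v : vtx) : bool := if v is VL then true else false.
Definition vtx_decode (b : bool) : vtx := if b then VL else VO.
Lemma vtx_codeK : cancel vtx_code vtx_decode. Proof. by case. Qed.
HB.instance Definition _ := Finite.copy vtx (can_type vtx_codeK).

(* Basis of B_+ : theta, eta, xi, xi_L. *)
Inductive bas := th | et | xi | xiL.
Definition bas_code (a : bas) : 'I_4 :=
  match a with th => inord 0 | et => inord 1 | xi => inord 2 | xiL => inord 3 end.
Definition bas_decode (i : 'I_4) : bas :=
  match val i with 0 => th | 1 => et | 2 => xi | _ => xiL end.
Lemma bas_codeK : cancel bas_code bas_decode.
Proof. by case; rewrite /bas_decode /= inordK. Qed.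
HB.instance Definition _ := Finite.copy bas (can_type bas_codeK).

(* x = id_(lft x) x id_(rgt x) *)
Definition lft (a : bas) : vtx :=
  match a with th => VO | et => VL | xi => VO | xiL => VL end.
Definition rgt (a : bas) : vtx :=
  match a with th => VL | et => VO | xi => VO | xiL => VL end.
Definition degb (a : bas) : nat := if a is th then 0 else 1.
(* product of basis elements of B_+ (None = 0) *)
Definition mulb (a b : bas) : option bas :=
  match a, b with th, et => Some xi | et, th => Some xiL | _, _ => None end.

(* walk through a tensor a_1 (x)_R ... (x)_R a_n; None if the tensor is 0 *)
Fixpoint walk (v : vtx) (s : seq bas) : option vtx :=
  if s is a :: s' then (if lft a == v then walk (rgt a) s' else None) else Some v.

(* basis tensors of B_+^{(x)_R n} on which an R-R-bimodule map to
   M = <theta> = id_O M id_L can be non-zero, and of internal degree d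
   with d + m = 0 (deg theta-bar = 0) *)
Definition admissible (n : nat) (m : int) (t : n.-tuple bas) : bool :=
  (walk VO t == Some VL) && ((sumn (map degb t))%:Z + m == 0).

Definition Tb (n : nat) (m : int) := {t : n.-tuple bas | admissible m t}.

(* homogeneous cochains of degree m: C^n_(m)(B, <theta>) *)
Definition Coch (k : fieldType) (n : nat) (m : int) := {ffun Tb n m -> k^o}.

(* extension by zero (R-R-linearity / grading) to all basis tensors *)
Definition ext (k : fieldType) n m (phi : Coch k n m) (t : n.-tuple bas) : k :=
  if insub t is Some u then phi u else 0.

(* quotient map B_+ -> B_+/B_1 = k theta-bar, on basis elements / zero *)
Definition projM (k : fieldType) (o : option bas) : k :=
  if o is Some th then 1 else 0.

(* merge positions i-1 and i (1 <= i <= n) of an (n+1)-tuple *)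
Definition merge_at n (t : n.+1.-tuple bas) (i : nat) : option (seq bas) :=
  match mulb (nth th t i.-1) (nth th t i) with
  | Some c => Some (take i.-1 t ++ c :: drop i.+1 t)
  | None => None
  end.

Definition ext_seq (k : fieldType) n m (phi : Coch k n m) (o : option (seq bas)) : k :=
  match o with
  | Some s => if (insub s : option (n.-tuple bas)) is Some u then ext phi u else 0
  | None => 0
  end.

Definition delta_fun (k : fieldType) n m (phi : Coch k n m) : Coch k n.+1 m :=
  [ffun u : Tb n.+1 m =>
     let t := val u in
     projM k (mulb (thead t) th) * ext phi [tuple of behead t]
     + \sum_(1 <= i < n.+1) (-1) ^+ i * ext_seq phi (merge_at t i)
     + (-1) ^+ n.+1 * (ext phi [tuple of belast (thead t) (behead t)]
                       * projM k (mulb th (last (thead t) (behead t))))].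

Definition delta (k : fieldType) n m : 'Hom(Coch k n m, Coch k n.+1 m) :=
  linfun (@delta_fun k n m).

Definition HHdim (k : fieldType) (n : nat) (m : int) : nat :=
  (\dim (lker (delta k n m)) -
   match n with 0 => 0 | n'.+1 => \dim (limg (delta k n' m)) end)%N.

From HB Require Import structures.
From mathcomp Require Import all_boot all_order all_algebra.
From mathcomp Require Import ring zify.
Set Implicit Arguments. Unset Strict Implicit. Unset Printing Implicit Defensive.
Import GRing.Theory.
Local Open Scope ring_scope.

(* Since B_+ kills the class of theta on both sides, the Hochschild differential
   of C(B, <theta>) is the inner bar differential on words in theta, eta, xi,
   xi_L, merging theta eta into xi and eta theta into xi_L. The relations
   xi theta = theta xi_L and xi_L eta = eta xi bring every word to an alternating
   normal form (theta or eta at even positions, xi or xi_L at odd ones), and an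
   explicit homotopy contracts the complex onto the alternating words, on which
   the differential vanishes. Counting path lengths in the quiver, an admissible
   alternating word of length n and internal degree n - j exists iff
   n + 2 + odd n = 4 j, and it is then unique; hence HH^n_(j - n) is k for
   n = 4 j - 3, 4 j - 2 and 0 otherwise. *)

Section CocycleDimension.
Variables (K : fieldType) (C0 C1 C2 : vectType K).
Variables (d0 : 'Hom(C0, C1)) (d1 : 'Hom(C1, C2)).
Hypothesis d1d0 : forall x, d1 (d0 x) = 0.

Lemma limg_sub_lker : (limg d0 <= lker d1)%VS.
Proof. by apply/subvP => y /memv_imgP [x _ ->]; rewrite memv_ker d1d0. Qed.

Lemma dim_lker_eq_limg :
  (forall x, d1 x = 0 -> exists y, x = d0 y) -> \dim (lker d1) = \dim (limg d0).
Proof.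
move=> exact_d; congr (\dim _); apply/eqP; rewrite eqEsubv limg_sub_lker andbT.
apply/subvP => x; rewrite memv_ker => /eqP /exact_d [y ->].
by rewrite memv_img ?memvf.
Qed.

Lemma dim_lker_eq_limgS (z : C1) (lam : C1 -> K) :
  d1 z = 0 -> lam z = 1 -> (forall y, lam (d0 y) = 0) ->
  (forall x, d1 x = 0 -> exists y c, x = d0 y + c *: z) ->
  \dim (lker d1) = (\dim (limg d0)).+1.
Proof.
move=> d1z lam_z lam_d0 cocycleP.
have z_notin : z \notin limg d0.
  apply/negP => /memv_imgP [y _ z_eq]; move: lam_z; rewrite z_eq lam_d0 => /eqP.
  by rewrite eq_sym oner_eq0.
have z_neq0 : z != 0 by apply: contraNneq z_notin => ->; rewrite mem0v.
have -> : lker d1 = (limg d0 + <[z]>)%VS.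
  apply/eqP; rewrite eqEsubv; apply/andP; split.
    apply/subvP => x; rewrite memv_ker => /eqP /cocycleP [y [c ->]].
    by rewrite memv_add ?memv_img ?memvf ?memvZ ?memv_line.
  rewrite subv_add limg_sub_lker /=; apply/subvP => x /vlineP [c ->].
  by rewrite memv_ker linearZ /= d1z scaler0.
rewrite dimv_disjoint_sum ?dim_vline ?z_neq0 ?addn1 //.
apply/eqP; rewrite -subv0; apply/subvP => x /memv_capP [x_im /vlineP [c x_eq]].
rewrite memv0 x_eq; have [-> | c_neq0] := eqVneq c 0; first by rewrite scale0r.
move: x_im; rewrite x_eq => /(memvZ c^-1); rewrite scalerA mulVf // scale1r => z_in.
by rewrite z_in in z_notin.
Qed.

End CocycleDimension.

Definition deg_word (w : seq bas) : nat := sumn (map degb w).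

Definition parallel (v w : seq bas) :=
  (forall s, walk s v = walk s w) /\ deg_word v = deg_word w.

Lemma walk_cat s v w :
  walk s (v ++ w) = if walk s v is Some e then walk e w else None.
Proof. by elim: v s => [|x v IH] s //=; case: ifP. Qed.

Lemma parallel_refl w : parallel w w.
Proof. by []. Qed.

Lemma parallel_sym v w : parallel v w -> parallel w v.
Proof. by case=> Pw Pd; split. Qed.

Lemma parallel_cat v1 w1 v2 w2 :
  parallel v1 w1 -> parallel v2 w2 -> parallel (v1 ++ v2) (w1 ++ w2).
Proof.
move=> [P1 D1] [P2 D2]; split; first by move=> s; rewrite !walk_cat P1; case: walk.
by move: D1 D2; rewrite /deg_word !map_cat !sumn_cat => -> ->.
Qed.

Lemma parallel_merge x y c : mulb x y = Some c -> parallel [:: c] [:: x; y].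
Proof. by case: x; case: y => //= -[<-]; split => // -[]. Qed.

Definition is_arrow (a : bas) := if a is (th | et) then true else false.

Lemma mulb_arrow x y c : mulb x y = Some c -> is_arrow x && is_arrow y.
Proof. by case: x; case: y => //=. Qed.

Lemma mulb_None x y : ~~ is_arrow y -> mulb x y = None.
Proof. by case: x; case: y. Qed.

Fixpoint alternating (w : seq bas) : bool :=
  match w with
  | [::] => true
  | [:: a] => is_arrow a
  | a :: b :: v => [&& is_arrow a, ~~ is_arrow b & alternating v]
  end.

Section BarComplex.
Variable R : comPzRingType.
Implicit Types (f g : seq bas -> R) (u v w : seq bas).

Definition merge_first f x u : R :=
  if u is y :: u' then (if mulb x y is Some c then f (c :: u') else 0) else 0.

Fixpoint bar_diff f w : R :=
  if w is x :: u then - merge_first f x u - bar_diff (fun v => f (x :: v)) u else 0.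

Lemma bar_diff_cons f x u :
  bar_diff f (x :: u) = - merge_first f x u - bar_diff (fun v => f (x :: v)) u.
Proof. by []. Qed.

Lemma merge_first_eq0 f x u : ~~ is_arrow x -> merge_first f x u = 0.
Proof.
case: u => //= y u; case E: (mulb x y) => [c|] // /negP[].
by case/andP: (mulb_arrow E).
Qed.

Lemma bar_diff_congr f g w :
  (forall v, (size v).+1 = size w -> parallel v w -> f v = g v) ->
  bar_diff f w = bar_diff g w.
Proof.
elim: w f g => [|x u IH] f g fg //=; congr (- _ - _).
  case: u fg {IH} => //= y u fg; case E: mulb => [c|] //; apply: fg => //.
  exact: (parallel_cat (parallel_merge E) (parallel_refl u)).
apply: IH => v Sv Pv; apply: fg; first by rewrite /= Sv.
exact: (parallel_cat (parallel_refl [:: x]) Pv).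
Qed.

Lemma bar_diff_ext f g w : f =1 g -> bar_diff f w = bar_diff g w.
Proof. by move=> fg; apply: bar_diff_congr => v _ _; apply: fg. Qed.

Lemma bar_diff_lin (a : R) f g w :
  bar_diff (fun v => a * f v + g v) w = a * bar_diff f w + bar_diff g w.
Proof.
elim: w f g => [|x u IH] f g /=; first by rewrite mulr0 addr0.
rewrite IH; case: u {IH} => [|y u] /=; [|case: mulb => [c|] /=]; ring.
Qed.

Lemma bar_diff0 w : bar_diff (fun=> 0) w = 0.
Proof.
elim: w => //= x u ->; rewrite subr0.
by case: u => [|y u] /=; [|case: mulb]; rewrite oppr0.
Qed.

Lemma bar_diffD f g w :
  bar_diff (fun v => f v + g v) w = bar_diff f w + bar_diff g w.
Proof.
rewrite (@bar_diff_ext _ (fun v => 1 * f v + g v)) ?bar_diff_lin ?mul1r // => v.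
by rewrite mul1r.
Qed.

Lemma bar_diffN f w : bar_diff (fun v => - f v) w = - bar_diff f w.
Proof.
rewrite (@bar_diff_ext _ (fun v => -1 * f v + 0)) ?bar_diff_lin ?bar_diff0 => [|v].
  by rewrite addr0 mulN1r.
by rewrite addr0 mulN1r.
Qed.

Lemma bar_diffB f g w :
  bar_diff (fun v => f v - g v) w = bar_diff f w - bar_diff g w.
Proof. by rewrite bar_diffD bar_diffN. Qed.

Lemma bar_diffK f w : bar_diff (bar_diff f) w = 0.
Proof.
elim: w f => [|x u IH] f //=.
rewrite bar_diffB IH subr0 bar_diffN opprK.
case: u {IH} => [|y u] /=; first by rewrite oppr0 add0r.
case: x => //; case: y => //=; rewrite ?oppr0 ?add0r ?bar_diff0 //;
  case: u => [|z u] /=; rewrite ?oppr0 ?subr0 ?add0r //;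
  try (case: z => /=; rewrite ?oppr0 ?subr0 ?add0r //); ring.
Qed.

Lemma bar_diffE f w : bar_diff f w = \sum_(1 <= i < size w) (-1) ^+ i *
  (if mulb (nth th w i.-1) (nth th w i) is Some c
   then f (take i.-1 w ++ c :: drop i.+1 w) else 0).
Proof.
elim: w f => [|x u IH] f; first by rewrite big_geq.
case: u IH => [|y u] IH; first by rewrite big_geq //= oppr0 addr0.
rewrite bar_diff_cons IH [RHS]big_nat_recl // -sumrN; congr (_ + _).
  by rewrite /= expr1 drop0; case: mulb => [c|]; rewrite ?mulN1r ?mulr0 ?oppr0.
apply: eq_big_nat => -[|i] //= _.
by rewrite /= !exprS; ring.
Qed.

Lemma bar_diff_cons2 f a c : ~~ is_arrow c ->
  forall v, bar_diff f [:: a, c & v] = bar_diff (fun w => f [:: a, c & w]) v.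
Proof. by move=> c_na v; rewrite /= mulb_None // merge_first_eq0 //; ring. Qed.

Lemma bar_diff_alternating f w : alternating w -> bar_diff f w = 0.
Proof.
move: {2}(size w) (leqnn (size w)) => n.
elim: n w f => [|n IH] [|a [|c v]] f // sz alt_w; first by rewrite /= oppr0 addr0.
case/and3P: alt_w => _ c_na alt_v; rewrite bar_diff_cons2 //.
exact: IH (ltnW sz) alt_v.
Qed.

End BarComplex.
Arguments bar_diff_cons2 {R} f a c.

Fixpoint alt_form (w : seq bas) : option (seq bas) :=
  match w with
  | [::] => Some [::]
  | [:: th] => Some [:: th]
  | [:: et] => Some [:: et]
  | xi :: th :: u | th :: xiL :: u => omap (fun v => [:: th, xiL & v]) (alt_form u)
  | xiL :: et :: u | et :: xi :: u => omap (fun v => [:: et, xi & v]) (alt_form u)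
  | _ => None
  end.

Definition composable (x y : bas) := rgt x == lft y.

Definition path_len (a : bas) : nat := if is_arrow a then 1 else 2.
Definition word_len (w : seq bas) : nat := sumn (map path_len w).

Lemma walk_len s e w : walk s w = Some e ->
  (word_len w + (s == VL) = 2 * deg_word w + (e == VL))%N.
Proof.
elim: w s => [|a w IH] s /=; first by case=> ->; rewrite muln0.
case: eqP => // <- /IH; rewrite /word_len /deg_word /=.
by case: a => /=; case: (e == VL); rewrite /path_len /=; lia.
Qed.

Lemma alternating_len w :
  alternating w -> (2 * word_len w + odd (size w) = 3 * size w)%N.
Proof.
move: {2}(size w) (leqnn (size w)) => n.
elim: n w => [|n IH] [|a [|b w]] //= sz; first by case: a.
case/and3P=> a_arr b_narr /(IH _ (ltnW sz)); rewrite /word_len /=.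
by case: a a_arr; case: b b_narr; rewrite /path_len /=; lia.
Qed.

Lemma alternating_uniq s v w : alternating v -> alternating w -> size v = size w ->
  walk s v != None -> walk s w != None -> v = w.
Proof.
move: {2}(size v) (leqnn (size v)) => n.
elim: n v w s => [|n IH] [|a [|b v]] [|a' [|b' w]] s //= sz.
  by case: a; case: a'; case: s.
move=> /and3P [a_arr b_narr alt_v] /and3P [a_arr' b_narr' alt_w] [S].
case: a a_arr; case: a' a_arr' => // _ _; case: s => //=;
  case: b b_narr; case: b' b_narr' => //= _ _ Wv Ww;
  by rewrite (IH v w _ (ltnW sz) alt_v alt_w S Wv Ww).
Qed.

Lemma walk_sorted s w : walk s w != None -> sorted composable w.
Proof.
elim: w s => [|x u IH] s //=; case: (lft x == s) => // W.
have := IH _ W; case: u W {IH} => //= y u.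
by case E: (lft y == rgt x) => //= _ ->; rewrite /composable (eqP E) eqxx.
Qed.

Lemma alt_form_spec w v : alt_form w = Some v ->
  [/\ size v = size w, parallel v w & alternating v].
Proof.
move: {2}(size w) (leqnn (size w)) => n.
elim: n w v => [|n IH] [|x [|y u]] v //= sz.
- by case=> <-.
- by case=> <-.
- by case: x => //= -[<-].
case: x; case: y => //=; case E: (alt_form u) => [q|] //= [<-] /=;
  have [Sq Pq Aq] := IH _ _ (ltnW sz) E; rewrite Sq Aq; split => //;
  by apply: (@parallel_cat [:: _; _] [:: _; _] _ _ _ Pq); split => // -[].
Qed.

Lemma alt_form_id w : alternating w -> sorted composable w -> alt_form w = Some w.
Proof.
move: {2}(size w) (leqnn (size w)) => n.
elim: n w => [|n IH] [|a [|b w]] //= sz; first by case: a.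
case/and3P=> a_arr b_narr alt_w /andP [ab bw].
have sorted_w : sorted composable w by case: w bw {alt_w sz} => //= c w /andP [].
rewrite (IH _ (ltnW sz) alt_w sorted_w).
by case: a a_arr ab {bw}; case: b b_narr.
Qed.

Section Homotopy.
Variable R : comPzRingType.
Implicit Types (f g : seq bas -> R) (u v w : seq bas).

(* Undo the leading merge (xi = theta eta, xi_L = eta theta), passing over the
   prefixes theta xi_L and eta xi, which are already in normal form. *)
Fixpoint bar_homotopy f w : R :=
  match w with
  | xi :: u => - f [:: th, et & u] +
      (if u is th :: u' then bar_homotopy (fun v => f [:: th, xiL & v]) u' else 0)
  | xiL :: u => - f [:: et, th & u] +
      (if u is et :: u' then bar_homotopy (fun v => f [:: et, xi & v]) u' else 0)
  | th :: xiL :: u => bar_homotopy (fun v => f [:: th, xiL & v]) u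
  | et :: xi :: u => bar_homotopy (fun v => f [:: et, xi & v]) u
  | _ => 0
  end.

Definition alt_proj f w : R := if alt_form w is Some v then f v else 0.

Lemma bar_homotopy_congr f g w :
  (forall v, size v = (size w).+1 -> parallel v w -> f v = g v) ->
  bar_homotopy f w = bar_homotopy g w.
Proof.
move: {2}(size w) (leqnn (size w)) => n.
elim: n w f g => [|n IH] w f g sz fg; first by case: w {fg} sz.
have shift a b c d u : parallel [:: a; b] [:: c; d] -> [:: c, d & u] = w ->
    bar_homotopy (fun v => f [:: a, b & v]) u = bar_homotopy (fun v => g [:: a, b & v]) u.
  move=> Pq Ew; apply: IH => [|v Sv Pv]; first by move: sz; rewrite -Ew /=; lia.
  by apply: fg; [rewrite -Ew /= Sv | rewrite -Ew; exact: (parallel_cat Pq Pv)].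
have merged a b c u : mulb a b = Some c -> c :: u = w -> f [:: a, b & u] = g [:: a, b & u].
  move=> E Ew; apply: fg; first by rewrite -Ew.
  by rewrite -Ew; exact: (parallel_cat (parallel_sym (parallel_merge E)) (parallel_refl u)).
case: w sz fg shift merged => [|[] [|[] u]] //= sz fg shift merged;
  rewrite ?(merged th et xi) ?(merged et th xiL) //.
- exact: shift (parallel_refl _) erefl.
- exact: shift (parallel_refl _) erefl.
- by congr (_ + _); apply: (shift _ _ xi th) => //; split=> // -[].
- by congr (_ + _); apply: (shift _ _ xiL et) => //; split=> // -[].
Qed.

Lemma bar_homotopy_ext f g w : f =1 g -> bar_homotopy f w = bar_homotopy g w.
Proof. by move=> fg; apply: bar_homotopy_congr => v _ _; apply: fg. Qed.

Lemma bar_homotopy0 w : bar_homotopy (fun=> 0) w = 0.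
Proof.
move: {2}(size w) (leqnn (size w)) => n.
elim: n w => [|n IH] [|[] [|[] u]] //= sz; rewrite ?IH ?oppr0 ?add0r //; lia.
Qed.

Lemma bar_homotopy_thxiL f v :
  bar_homotopy f [:: th, xiL & v] = bar_homotopy (fun w => f [:: th, xiL & w]) v.
Proof. by []. Qed.

Lemma bar_homotopy_etxi f v :
  bar_homotopy f [:: et, xi & v] = bar_homotopy (fun w => f [:: et, xi & w]) v.
Proof. by []. Qed.

Lemma bar_homotopy_xith f v : bar_homotopy f [:: xi, th & v] =
  - f [:: th, et, th & v] + bar_homotopy (fun w => f [:: th, xiL & w]) v.
Proof. by []. Qed.

Lemma alt_proj_xith f v :
  alt_proj f [:: xi, th & v] = alt_proj (fun w => f [:: th, xiL & w]) v.
Proof. by rewrite /alt_proj /=; case: alt_form. Qed.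

Lemma bar_homotopy_xiLet f v : bar_homotopy f [:: xiL, et & v] =
  - f [:: et, th, et & v] + bar_homotopy (fun w => f [:: et, xi & w]) v.
Proof. by []. Qed.

Lemma alt_proj_xiLet f v :
  alt_proj f [:: xiL, et & v] = alt_proj (fun w => f [:: et, xi & w]) v.
Proof. by rewrite /alt_proj /=; case: alt_form. Qed.

Lemma alt_proj_thxiL f v :
  alt_proj f [:: th, xiL & v] = alt_proj (fun w => f [:: th, xiL & w]) v.
Proof. by rewrite /alt_proj /=; case: alt_form. Qed.

Lemma alt_proj_etxi f v :
  alt_proj f [:: et, xi & v] = alt_proj (fun w => f [:: et, xi & w]) v.
Proof. by rewrite /alt_proj /=; case: alt_form. Qed.

Lemma bar_homotopyP f w : sorted composable w ->
  bar_diff (bar_homotopy f) w + bar_homotopy (bar_diff f) w = f w - alt_proj f w.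
Proof.
move: {2}(size w) (leqnn (size w)) => n.
elim: n w f => [|n IH] [|x [|y u]] f // sz chw; try by rewrite /alt_proj /=; ring.
  by case: x {chw sz}; rewrite /alt_proj /=; ring.
have chu : sorted composable u by case: u chw {sz} => // ? ? /andP[_ /andP[]].
have IHu := IH u _ (ltnW sz) chu.
clear sz; case: x chw; case: y => chw; try by case/andP: chw.
- rewrite /alt_proj /= bar_diff0.
  by case: u {IHu chu} chw => [|[] u] _ /=; ring.
- rewrite bar_diff_cons2 // (bar_diff_ext _ (bar_homotopy_thxiL f)).
  by rewrite bar_homotopy_thxiL (bar_homotopy_ext _ (bar_diff_cons2 f th xiL isT)) IHu alt_proj_thxiL.
- rewrite /alt_proj /= bar_diff0.
  by case: u {IHu chu} chw => [|[] u] _ /=; ring.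
- rewrite bar_diff_cons2 // (bar_diff_ext _ (bar_homotopy_etxi f)).
  by rewrite bar_homotopy_etxi (bar_homotopy_ext _ (bar_diff_cons2 f et xi isT)) IHu alt_proj_etxi.
- rewrite [bar_diff _ _]/= bar_diffD bar_diffN bar_homotopy_xith.
  rewrite (bar_homotopy_ext _ (bar_diff_cons2 f th xiL isT)) [bar_diff f _]/=.
  set f' := fun v => f [:: th, xiL & v].
  rewrite -(addrK (bar_homotopy (bar_diff f') u) (bar_diff (bar_homotopy f') u)) IHu.
  rewrite alt_proj_xith {}/f'; case: u {IHu chu chw} => [|[] u] /=; ring.
- by rewrite /alt_proj /= !merge_first_eq0 // bar_diffD bar_diffN bar_diff0; ring.
- rewrite [bar_diff _ _]/= bar_diffD bar_diffN bar_homotopy_xiLet.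
  rewrite (bar_homotopy_ext _ (bar_diff_cons2 f et xi isT)) [bar_diff f _]/=.
  set f' := fun v => f [:: et, xi & v].
  rewrite -(addrK (bar_homotopy (bar_diff f') u) (bar_diff (bar_homotopy f') u)) IHu.
  rewrite alt_proj_xiLet {}/f'; case: u {IHu chu chw} => [|[] u] /=; ring.
- by rewrite /alt_proj /= !merge_first_eq0 // bar_diffD bar_diffN bar_diff0; ring.
Qed.
End Homotopy.

Definition adm_word (m : int) (w : seq bas) : bool :=
  (walk VO w == Some VL) && ((deg_word w)%:Z + m == 0).

Lemma adm_word_parallel m v w : parallel v w -> adm_word m v = adm_word m w.
Proof. by case=> Pw Pd; rewrite /adm_word Pw Pd. Qed.

Local Notation word u := (val (val u)).

Lemma Tb_word n m (u : Tb n m) : size (word u) = n /\ adm_word m (word u).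
Proof. by split; [rewrite size_tuple | exact: (valP u)]. Qed.

Lemma Tb_of_word n m w : size w = n -> adm_word m w -> exists u : Tb n m, word u = w.
Proof.
move=> Sw Aw; have Sw' : size w == n by rewrite Sw.
by exists (exist _ (Tuple Sw') Aw).
Qed.

Lemma Tb_sorted n m (u : Tb n m) : sorted composable (word u).
Proof.
have [_ /andP [/eqP walk_u _]] := Tb_word u.
by apply: (@walk_sorted VO); rewrite walk_u.
Qed.

Section Cochains.
Variable k : fieldType.
Implicit Types (n : nat) (m : int).

Definition ext_word n m (phi : Coch k n m) (w : seq bas) : k := ext_seq phi (Some w).

Lemma ext_wordE n m (phi : Coch k n m) (u : Tb n m) : ext_word phi (word u) = phi u.
Proof. by rewrite /ext_word /= valK /ext valK. Qed.

Lemma ext_word_eq0 n m (phi : Coch k n m) w :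
  ~~ ((size w == n) && adm_word m w) -> ext_word phi w = 0.
Proof.
move=> w_out; rewrite /ext_word /=; case: insubP => [t _ tw|] //; rewrite /ext.
case: insubP => [u _ ut|] //; case/negP: w_out.
by have [] := Tb_word u; rewrite ut tw => -> ->; rewrite eqxx.
Qed.

Lemma ext_wordD n m a (x y : Coch k n m) w :
  ext_word (a *: x + y) w = a * ext_word x w + ext_word y w.
Proof.
rewrite /ext_word /ext_seq; case: insub => [t|]; last by rewrite mulr0 addr0.
by rewrite /ext; case: insub => [u|]; rewrite ?ffunE ?mulr0 ?addr0.
Qed.

(* The outer terms vanish: products in B_+ lie in B_1, which projects to 0. *)
Lemma delta_funE n m (phi : Coch k n m) (u : Tb n.+1 m) :
  delta_fun phi u = bar_diff (ext_word phi) (word u).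
Proof.
have mul_th b : projM k (mulb b th) = 0 by case: b.
have th_mul b : projM k (mulb th b) = 0 by case: b.
rewrite ffunE /= mul_th th_mul mul0r add0r mulr0 [X in _ + X]mulr0 addr0.
rewrite bar_diffE size_tuple; apply: eq_big_nat => i _.
by rewrite /merge_at; case: mulb.
Qed.

Lemma ext_word0 n m w : ext_word (0 : Coch k n m) w = 0.
Proof.
by rewrite /ext_word /ext_seq; case: insub => // t; rewrite /ext; case: insub => // u; rewrite ffunE.
Qed.

Lemma ext_word_delta n m (phi : Coch k n m) :
  ext_word (delta_fun phi) =1 bar_diff (ext_word phi).
Proof.
move=> w; have [/andP [/eqP Sw Aw] | w_out] := boolP ((size w == n.+1) && adm_word m w).
  by have [u <-] := Tb_of_word Sw Aw; rewrite ext_wordE delta_funE.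
rewrite ext_word_eq0 // (@bar_diff_congr _ _ (fun=> 0)) ?bar_diff0 // => v Sv Pv.
apply: ext_word_eq0; apply: contra w_out => /andP [/eqP Sv' Av].
by rewrite -Sv Sv' eqxx -(adm_word_parallel m Pv).
Qed.

Definition homotopy_coch n m (phi : Coch k n.+1 m) : Coch k n m :=
  [ffun u => bar_homotopy (ext_word phi) (word u)].

Definition alt_coch n m (phi : Coch k n m) : Coch k n m :=
  [ffun u => alt_proj (ext_word phi) (word u)].

Lemma ext_word_homotopy n m (phi : Coch k n.+1 m) :
  ext_word (homotopy_coch phi) =1 bar_homotopy (ext_word phi).
Proof.
move=> w; have [/andP [/eqP Sw Aw] | w_out] := boolP ((size w == n) && adm_word m w).
  by have [u <-] := Tb_of_word Sw Aw; rewrite ext_wordE ffunE.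
rewrite ext_word_eq0 // (@bar_homotopy_congr _ _ (fun=> 0)) ?bar_homotopy0 // => v Sv Pv.
apply: ext_word_eq0; apply: contra w_out => /andP [/eqP Sv' Av].
by move: Sv'; rewrite Sv => -[->]; rewrite eqxx -(adm_word_parallel m Pv).
Qed.

Lemma delta_funK n m (phi : Coch k n m) : delta_fun (delta_fun phi) = 0.
Proof.
apply/ffunP => u; rewrite delta_funE (bar_diff_ext _ (ext_word_delta phi)).
by rewrite bar_diffK ffunE.
Qed.

Lemma delta_fun_linear n m : linear (@delta_fun k n m).
Proof.
move=> a x y; apply/ffunP => u.
rewrite (delta_funE (a *: x + y) u) [RHS]ffunE [X in _ = X + _]ffunE.
rewrite (delta_funE x u) (delta_funE y u) -bar_diff_lin.
by apply: bar_diff_ext => w; rewrite ext_wordD.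
Qed.

HB.instance Definition _ n m := GRing.isLinear.Build k (Coch k n m) (Coch k n.+1 m) _
  (@delta_fun k n m) (@delta_fun_linear n m).

Lemma deltaE n m x : delta k n m x = delta_fun x.
Proof. by rewrite lfunE. Qed.

Lemma homotopy_cochE n m (phi : Coch k n.+1 m) :
  delta_fun (homotopy_coch phi) + homotopy_coch (delta_fun phi) = phi - alt_coch phi.
Proof.
apply/ffunP => u; rewrite [LHS]ffunE [RHS]ffunE delta_funE !ffunE -ext_wordE.
rewrite (bar_diff_ext _ (ext_word_homotopy phi)) (bar_homotopy_ext _ (ext_word_delta phi)).
by rewrite bar_homotopyP // Tb_sorted.
Qed.

Lemma homotopy_coch0 n m : homotopy_coch (0 : Coch k n.+1 m) = 0.
Proof.
apply/ffunP => u; rewrite !ffunE (bar_homotopy_ext _ (@ext_word0 _ _)).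
exact: bar_homotopy0.
Qed.

Lemma alt_coch_delta n m (phi : Coch k n.+1 m) :
  delta_fun (alt_coch phi) = alt_coch (delta_fun phi).
Proof.
have altE (n' : nat) (x : Coch k n'.+1 m) :
    alt_coch x = x - (delta_fun (homotopy_coch x) + homotopy_coch (delta_fun x)).
  by rewrite homotopy_cochE opprB addrC subrK.
rewrite !altE delta_funK homotopy_coch0 linearB linearD /= !delta_funK.
by rewrite add0r addr0.
Qed.

Lemma alt_cochE n m (phi : Coch k n m) (u : Tb n m) :
  alt_coch phi u = if alt_form (word u) is Some v then ext_word phi v else 0.
Proof. by rewrite ffunE. Qed.

Lemma alt_coch_eq0 n m (phi : Coch k n m) :
  (forall w, size w = n -> adm_word m w -> ~~ alternating w) -> alt_coch phi = 0.
Proof.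
move=> no_alt; apply/ffunP => u; rewrite alt_cochE ffunE.
case E: alt_form => [v|] //; have [Sv Pv Av] := alt_form_spec E.
have [Su Au] := Tb_word u.
by have := no_alt v (etrans Sv Su); rewrite (adm_word_parallel m Pv) Au Av => /(_ isT).
Qed.

Lemma cocycle_decomp n m (x : Coch k n.+1 m) :
  delta_fun x = 0 -> x = delta_fun (homotopy_coch x) + alt_coch x.
Proof.
move=> dx; have := homotopy_cochE x; rewrite dx homotopy_coch0 addr0 => ->.
by rewrite subrK.
Qed.

Lemma HHdim0 m : HHdim k 0 m = 0%N.
Proof.
rewrite /HHdim subn0; apply/eqP; rewrite dimv_eq0 -subv0.
apply/subvP => x _; rewrite memv0; apply/eqP/ffunP => u.
by have [] := Tb_word u; case: (word u).
Qed.

Lemma HHdim_eq0 n m :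
  (forall w, size w = n.+1 -> adm_word m w -> ~~ alternating w) -> HHdim k n.+1 m = 0%N.
Proof.
move=> no_alt; rewrite /HHdim (@dim_lker_eq_limg _ _ _ _ (delta k n m)) ?subnn //.
  by move=> x; rewrite !deltaE delta_funK.
move=> x; rewrite deltaE => /cocycle_decomp ->; exists (homotopy_coch x).
by rewrite deltaE alt_coch_eq0 // addr0.
Qed.

Lemma HHdim_eq1 n m w0 : size w0 = n.+1 -> adm_word m w0 -> alternating w0 ->
  (forall w, size w = n.+2 -> adm_word m w -> ~~ alternating w) -> HHdim k n.+1 m = 1%N.
Proof.
move=> S0 A0 alt0 no_alt; have [u0 w0E] := Tb_of_word S0 A0.
have alt_form0 : alt_form w0 = Some w0.
  by rewrite alt_form_id // -w0E Tb_sorted.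
pose z := alt_coch [ffun u => (u == u0)%:R : k].
have zE (x : Coch k n.+1 m) : alt_coch x = x u0 *: z.
  apply/ffunP => u; rewrite [RHS]ffunE /z !alt_cochE.
  case E: alt_form => [v|]; last by rewrite scaler0.
  have [Sv Pv Av] := alt_form_spec E; have [Su Au] := Tb_word u.
  have walkv : walk VO v = Some VL by case: Pv => -> _; case/andP: Au => /eqP.
  have walk0 : walk VO w0 = Some VL by case/andP: A0 => /eqP.
  rewrite (@alternating_uniq VO v w0) ?walkv ?walk0 ?Sv ?Su ?S0 //.
  by rewrite -w0E !ext_wordE ffunE eqxx; exact: esym (mulr1 _).
rewrite /HHdim (@dim_lker_eq_limgS _ _ _ _ (delta k n m) _ _ z (fun x => x u0)).
- by rewrite subSnn.
- by move=> x; rewrite !deltaE delta_funK.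
- by rewrite deltaE alt_coch_delta alt_coch_eq0.
- by rewrite alt_cochE w0E alt_form0 -w0E ext_wordE ffunE eqxx.
- by move=> y; rewrite deltaE delta_funE w0E bar_diff_alternating.
move=> x; rewrite deltaE => /cocycle_decomp x_eq; exists (homotopy_coch x), (x u0).
by rewrite deltaE -zE.
Qed.

End Cochains.

Definition cycle_word (i : nat) : seq bas := flatten (nseq i [:: th; xiL; et; xi]).

Lemma size_cycle_word i w : size (cycle_word i ++ w) = (4 * i + size w)%N.
Proof. by elim: i => //= i IH; rewrite IH mulnS. Qed.

Lemma walk_cycle_word i w : walk VO (cycle_word i ++ w) = walk VO w.
Proof. by elim: i. Qed.

Lemma deg_cycle_word i w : deg_word (cycle_word i ++ w) = (3 * i + deg_word w)%N.
Proof. by elim: i => //= i; rewrite /deg_word /= => ->; rewrite mulnS. Qed.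

Lemma alternating_cycle_word i w : alternating (cycle_word i ++ w) = alternating w.
Proof. by elim: i. Qed.

Lemma adm_alternating_size i w : adm_word (i.+1%:Z - (size w)%:Z) w -> alternating w ->
  size w \in [:: 4 * i + 1; 4 * i + 2]%N.
Proof.
case/andP=> /eqP walk_w /eqP deg_w alt_w.
have := walk_len walk_w; have := alternating_len alt_w; move: deg_w.
have := odd_double_half (size w); rewrite !inE.
case: (odd (size w)) => /= ? ? ? ?; apply/orP; [left|right]; apply/eqP; lia.
Qed.

Theorem HHdim_diagonal (k : fieldType) (i n : nat) :
  HHdim k n (i.+1%:Z - n%:Z) = (if n \in [:: 4 * i + 1; 4 * i + 2] then 1 else 0)%N.
Proof.
case: n => [|n]; first by rewrite HHdim0 !inE addn1 addn2.
case: ifP => [| /negbT n_out]; last first.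
  apply: HHdim_eq0 => w Sw adm_w; apply: contra n_out => alt_w.
  by rewrite -Sw in adm_w *; apply: adm_alternating_size.
rewrite !inE => /orP n_in.
have no_alt : forall w, size w = n.+2 -> adm_word (i.+1%:Z - n.+1%:Z) w -> ~~ alternating w.
  move=> w Sw adm_w; apply/negP => alt_w.
  have adm_w' : adm_word (i.+2%:Z - (size w)%:Z) w.
    by rewrite Sw (_ : i.+2%:Z - n.+2%:Z = i.+1%:Z - n.+1%:Z) //; lia.
  have := adm_alternating_size adm_w' alt_w.
  by rewrite Sw !inE => /orP [] /eqP; case: n_in => /eqP; lia.
case: n_in => /eqP n_eq.
- apply: (@HHdim_eq1 k n _ (cycle_word i ++ [:: th])) => //.
  + by rewrite size_cycle_word n_eq addn1.
  + by rewrite /adm_word walk_cycle_word deg_cycle_word /deg_word /=; apply/eqP; lia.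
  + by rewrite alternating_cycle_word.
- apply: (@HHdim_eq1 k n _ (cycle_word i ++ [:: th; xiL])) => //.
  + by rewrite size_cycle_word n_eq addn2.
  + by rewrite /adm_word walk_cycle_word deg_cycle_word /deg_word /=; apply/eqP; lia.
  + by rewrite alternating_cycle_word.
Qed.

Theorem mainTheorem8 (k : fieldType)
  (h2 : (2%:R : k) != 0) (h3 : (3%:R : k) != 0) (n : nat) :
  HHdim k n (1 - n%:Z) = (if n \in [:: 1; 2]%N then 1 else 0)%N /\
  HHdim k n (2 - n%:Z) = (if n \in [:: 5; 6]%N then 1 else 0)%N /\
  HHdim k n (3 - n%:Z) = (if n \in [:: 9; 10]%N then 1 else 0)%N /\
  HHdim k n (4 - n%:Z) = (if n \in [:: 13; 14]%N then 1 else 0)%N.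
Proof. by split; [|split; [|split]]; apply: HHdim_diagonal. Qed.
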